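(* Let $k\ge 3$ be an integer and let $0<r\le \log k/k$ (natural logarithm). Define, for $\mu\in[0,1]$, \[ G(\mu)=k^{1-k}(k-1-\mu)^{k-2}\bigl(k(1-\mu+\mu^2)-1\bigr), \] \[ t(\mu)=\Bigl(\tfrac{1-\mu}{k}\Bigr)^{\frac{1-\mu}{k}}\Bigl(\tfrac{\mu}{k}\Bigr)^{\frac{2\mu}{k}}\Bigl(1-\tfrac{1}{k}-\tfrac{\mu}{k}\Bigr)^{1-\frac1k-\frac{\mu}{k}} \] (with the convention $0^0=1$), and $\Gamma_r(\mu)=G(\mu)^r/t(\mu)$. Let $g(\delta)=k\delta(1-\delta)^{k-1}$ and \[ \gamma_r=\frac{g(1/k)^r}{(1/k)^{1/k}(1-1/k)^{1-1/k}} . \] Then for every $\mu\in[0,1]$, $\Gamma_r(\mu)\le \gamma_r^2$. *)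

From Stdlib Require Import Reals Lra.
Open Scope R_scope.

(* Real power a^b for a >= 0, with the conventions 0^0 = 1 and 0^b = 0 for b <> 0. *)
Definition rpow (a b : R) : R :=
  if Req_EM_T a 0 then (if Req_EM_T b 0 then 1 else 0) else Rpower a b.

Definition Gfun (k : nat) (mu : R) : R :=
  Rpower (INR k) (1 - INR k) * (INR k - 1 - mu) ^ (k - 2)
  * (INR k * (1 - mu + mu ^ 2) - 1).

Definition tfun (k : nat) (mu : R) : R :=
  let K := INR k in
  rpow ((1 - mu) / K) ((1 - mu) / K)
  * rpow (mu / K) (2 * mu / K)
  * rpow (1 - 1 / K - mu / K) (1 - 1 / K - mu / K).

Definition Gamma_r (k : nat) (r mu : R) : R := rpow (Gfun k mu) r / tfun k mu.

Definition gfun (k : nat) (d : R) : R := INR k * d * (1 - d) ^ (k - 1).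

Definition gamma_r (k : nat) (r : R) : R :=
  let K := INR k in
  rpow (gfun k (1 / K)) r / (rpow (1 / K) (1 / K) * rpow (1 - 1 / K) (1 - 1 / K)).

(* Taking logarithms, the claim reads
     r (ln G(mu) - 2 ln g(1/k)) <= ln t(mu) - 2 ln t0,
   with t0 = (1/k)^(1/k) (1-1/k)^(1-1/k).  Put y = 1 - k mu / (k-1); it vanishes
   at mu = 1 - 1/k, where equality holds.  Applying ln x <= x - 1 to suitably
   normalised factors of G bounds the left side by r y^2 <= (ln k / k) y^2.  The
   right side is a relative entropy, and elementary Taylor-type estimates of
   x ln x, separately for y >= 0 and y <= 0, bound it below by (ln k / k) y^2. *)

From Stdlib Require Import Reals Lra Lia.
From Coquelicot Require Import Coquelicot.
Open Scope R_scope.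

Definition xlnx (x : R) : R := x * ln x.

Lemma le_of_derive_nonneg (f f' : R -> R) a b : a <= b ->
  (forall c, a <= c <= b -> is_derive f c (f' c)) ->
  (forall c, a < c < b -> 0 <= f' c) -> f a <= f b.
Proof.
  intros Hab Hd Hp. destruct (Req_dec a b) as [->|Hne]; [lra|].
  destruct (MVT_cor2 f f' a b) as [c [Hfab Hc]]; [lra| |].
  - intros c Hc. apply is_derive_Reals, Hd. exact Hc.
  - specialize (Hp c Hc). nra.
Qed.

Lemma exp_le_exp_of_le x y : x <= y -> exp x <= exp y.
Proof.
  intros [Hlt | ->]; [|lra]. apply Rlt_le, exp_increasing, Hlt.
Qed.

Lemma ln_le_sub1 x : 0 < x -> ln x <= x - 1.
Proof. intros Hx. pose proof (exp_ineq1_le (ln x)) as H. rewrite exp_ln in H; lra. Qed.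

Lemma xlnx_ge_sub1 x : 0 < x -> x - 1 <= xlnx x.
Proof.
  intros Hx. unfold xlnx.
  pose proof (ln_le_sub1 (/ x) (Rinv_0_lt_compat _ Hx)) as H.
  rewrite ln_Rinv in H by lra.
  assert (x * - ln x <= x * (/ x - 1)) by (apply Rmult_le_compat_l; lra).
  replace (x * (/ x - 1)) with (1 - x) in * by (field; lra). lra.
Qed.

Lemma xlnx_ge_quadratic x : 0 <= x <= 1 -> (x - 1) + (x - 1)^2 / 2 <= xlnx x.
Proof.
  intros Hx. unfold xlnx. destruct (Req_dec x 0) as [->|Hne]; [rewrite Rmult_0_l; lra|].
  set (h := fun x => (x - 1) + (x - 1)^2 / 2 - x * ln x).
  assert (H : h x <= h 1).
  { apply (le_of_derive_nonneg h (fun x => x - 1 - ln x)); [lra| |].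
    - intros c Hc. unfold h. auto_derive; [lra|]. field. lra.
    - intros c Hc. pose proof (ln_le_sub1 c). lra. }
  unfold h in H. rewrite ln_1 in H. lra.
Qed.

Lemma ln1p_ge_quadratic t : 0 <= t -> t - t^2 / 2 <= ln (1 + t).
Proof.
  intros Ht. set (p := fun t => ln (1 + t) - t + t^2 / 2).
  assert (H : p 0 <= p t).
  { apply (le_of_derive_nonneg p (fun t => t^2 / (1 + t))); [lra| |].
    - intros c Hc. unfold p. auto_derive; [lra|]. field. lra.
    - intros c Hc. apply Rdiv_le_0_compat; nra. }
  unfold p in H. rewrite Rplus_0_r, ln_1 in H. lra.
Qed.

Lemma xlnx1p_ge_cubic t : 0 <= t -> t + t^2 / 2 - t^3 / 6 <= xlnx (1 + t).
Proof.
  intros Ht. unfold xlnx. set (p := fun t => (1 + t) * ln (1 + t) - t - t^2 / 2 + t^3 / 6).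
  assert (H : p 0 <= p t).
  { apply (le_of_derive_nonneg p (fun t => ln (1 + t) - t + t^2 / 2)); [lra| |].
    - intros c Hc. unfold p. auto_derive; [lra|]. field. lra.
    - intros c Hc. pose proof (ln1p_ge_quadratic c). lra. }
  unfold p in H. rewrite Rplus_0_r, ln_1 in H. lra.
Qed.

Lemma ln1p_ge_pade z : 0 <= z -> 2 * z / (z + 2) <= ln (1 + z).
Proof.
  intros Hz. set (p := fun z => ln (1 + z) - 2 * z / (z + 2)).
  assert (H : p 0 <= p z).
  { apply (le_of_derive_nonneg p (fun z => z^2 / ((1 + z) * (z + 2)^2))); [lra| |].
    - intros c Hc. unfold p. auto_derive; [lra|]. field. lra.
    - intros c Hc. apply Rdiv_le_0_compat; [nra|].
      apply Rmult_lt_0_compat; nra. }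
  unfold p in H. rewrite Rplus_0_r, ln_1 in H.
  replace (2 * 0 / (0 + 2)) with 0 in H by field. lra.
Qed.

Lemma xlnx1p_sub_ratio_antimono z M : 0 < z <= M ->
  (xlnx (1 + M) - M) * z^2 <= (xlnx (1 + z) - z) * M^2.
Proof.
  intros [Hz HzM]. unfold xlnx.
  set (q := fun z => - (((1 + z) * ln (1 + z) - z) / z^2)).
  assert (H : q z <= q M).
  { apply (le_of_derive_nonneg q (fun z => ((z + 2) * ln (1 + z) - 2 * z) / z^3));
      [lra| |].
    - intros c Hc. unfold q. auto_derive; [repeat split; nra|]. field. lra.
    - intros c Hc. apply Rdiv_le_0_compat; [|apply pow_lt; lra].
      pose proof (ln1p_ge_pade c ltac:(lra)) as Hpade.
      apply (Rmult_le_compat_l (c + 2)) in Hpade; [|lra].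
      replace ((c + 2) * (2 * c / (c + 2))) with (2 * c) in Hpade by (field; lra).
      lra. }
  unfold q in H. apply Ropp_le_cancel in H.
  assert (Hz2 : 0 < z^2) by (apply pow_lt; lra).
  assert (HM2 : 0 < M^2) by (apply pow_lt; lra).
  apply (Rmult_le_compat_r (z^2 * M^2)) in H; [|nra].
  replace (((1 + M) * ln (1 + M) - M) / M^2 * (z^2 * M^2))
    with (((1 + M) * ln (1 + M) - M) * z^2) in H by (field; lra).
  replace (((1 + z) * ln (1 + z) - z) / z^2 * (z^2 * M^2))
    with (((1 + z) * ln (1 + z) - z) * M^2) in H by (field; lra).
  exact H.
Qed.

Lemma ln_3_le : ln 3 <= 1.35.
Proof.
  assert (H : 3 <= exp 1.35).
  { replace 1.35 with (0.45 + 0.45 + 0.45) by lra. rewrite !exp_plus.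
    pose proof (exp_ineq1_le 0.45). pose proof (exp_pos 0.45). nra. }
  rewrite <- (ln_exp 1.35). apply ln_le; lra.
Qed.

Lemma xlnx_le_quadratic x : 3 <= x -> xlnx x <= x^2 / 2 - 1 / 3.
Proof.
  intros Hx. unfold xlnx.
  assert (Hln : ln x <= 1.35 + x / 3 - 1).
  { replace x with (3 * (x / 3)) at 1 by field. rewrite ln_mult by lra.
    pose proof ln_3_le. pose proof (ln_le_sub1 (x / 3)). lra. }
  apply (Rmult_le_compat_l x) in Hln; [nra | lra].
Qed.

(* For [m = k - 1] and [y = mu_dev k mu] this is [k^2] times the relative entropy
   of the law [(a, b, b, c)] formed by the bases in [tfun] with respect to the
   product law [(1/k, 1 - 1/k)] x [(1/k, 1 - 1/k)]. *)
Definition entropy_gap (m y : R) : R :=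
  xlnx (1 + m * y) + 2 * m * xlnx (1 - y) + m^2 * xlnx (1 + y / m).

Lemma entropy_gap_ge_sqr_nonneg m y : 2 <= m -> 0 <= y <= 1 ->
  (m + 1) * ln (m + 1) * y^2 <= entropy_gap m y.
Proof.
  intros Hm Hy. unfold entropy_gap.
  destruct (Req_dec y 0) as [->|Hy0].
  { rewrite Rmult_0_r, Rplus_0_r, Rminus_0_r, Rdiv_0_l, Rplus_0_r.
    unfold xlnx. rewrite ln_1. lra. }
  assert (Hfirst : ((m + 1) * ln (m + 1) - m) * y^2 <= xlnx (1 + m * y) - m * y).
  { pose proof (xlnx1p_sub_ratio_antimono (m * y) m ltac:(split; nra)) as H.
    unfold xlnx in *. rewrite (Rplus_comm 1 m) in H.
    apply (Rmult_le_reg_r (m^2)); [nra|]. nra. }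
  assert (Hsecond : -y + y^2 / 2 <= xlnx (1 - y)).
  { pose proof (xlnx_ge_quadratic (1 - y) ltac:(lra)). lra. }
  assert (Hthird : y / m <= xlnx (1 + y / m)).
  { assert (0 <= y / m) by (apply Rdiv_le_0_compat; lra).
    pose proof (xlnx_ge_sub1 (1 + y / m) ltac:(lra)). lra. }
  apply (Rmult_le_compat_l (2 * m)) in Hsecond; [|lra].
  apply (Rmult_le_compat_l (m^2)) in Hthird; [|nra].
  replace (m^2 * (y / m)) with (m * y) in Hthird by (field; lra).
  nra.
Qed.

Lemma entropy_gap_ge_sqr_nonpos m y : 2 <= m -> -1 / m <= y <= 0 ->
  (m + 1) * ln (m + 1) * y^2 <= entropy_gap m y.
Proof.
  intros Hm Hy. unfold entropy_gap.
  assert (Hmy : -1 <= m * y <= 0).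
  { destruct Hy as [Hlo Hhi]. split; [|nra].
    apply (Rmult_le_compat_l m) in Hlo; [|lra].
    replace (m * (-1 / m)) with (-1) in Hlo by (field; lra). lra. }
  assert (Hym : 0 <= 1 + y / m <= 1).
  { replace (1 + y / m) with ((m + y) / m) by (field; lra).
    split; [apply Rdiv_le_0_compat; nra|].
    apply Rmult_le_reg_r with m; [lra|]. field_simplify; lra. }
  assert (Hfirst : m * y + (m * y)^2 / 2 <= xlnx (1 + m * y)).
  { pose proof (xlnx_ge_quadratic (1 + m * y) ltac:(lra)). lra. }
  assert (Hsecond : -y + y^2 / 2 + y^3 / 6 <= xlnx (1 - y)).
  { pose proof (xlnx1p_ge_cubic (- y) ltac:(lra)) as H.
    replace (1 + - y) with (1 - y) in H by ring. lra. }
  assert (Hthird : m * y + y^2 / 2 <= m^2 * xlnx (1 + y / m)).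
  { pose proof (xlnx_ge_quadratic (1 + y / m) Hym) as H.
    apply (Rmult_le_compat_l (m^2)) in H; [|nra].
    replace (m^2 * (1 + y / m - 1 + (1 + y / m - 1)^2 / 2))
      with (m * y + y^2 / 2) in H by (field; lra). exact H. }
  assert (Hlog : (m + 1) * ln (m + 1) <= (m + 1)^2 / 2 - 1 / 3)
    by (apply xlnx_le_quadratic; lra).
  assert (Hcube : 0 <= - m * y^3 <= y^2) by (split; nra).
  apply (Rmult_le_compat_l (2 * m)) in Hsecond; [|lra].
  assert ((m + 1) * ln (m + 1) * y^2 <= ((m + 1)^2 / 2 - 1 / 3) * y^2)
    by (apply Rmult_le_compat_r; nra).
  nra.
Qed.

Lemma entropy_gap_ge_sqr m y : 2 <= m -> -1 / m <= y <= 1 ->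
  (m + 1) * ln (m + 1) * y^2 <= entropy_gap m y.
Proof.
  intros Hm Hy. destruct (Rle_lt_dec 0 y).
  - apply entropy_gap_ge_sqr_nonneg; lra.
  - apply entropy_gap_ge_sqr_nonpos; lra.
Qed.

Lemma rpow_pos_exp x y : 0 < x -> rpow x y = exp (y * ln x).
Proof. intros Hx. unfold rpow. destruct (Req_EM_T x 0); [lra | reflexivity]. Qed.

Lemma rpow_scaled_self x c y : 0 <= x -> y = c * x -> rpow x y = exp (c * xlnx x).
Proof.
  intros Hx ->. unfold rpow, xlnx. destruct (Req_EM_T x 0) as [->|Hx0].
  - rewrite Rmult_0_r, Rmult_0_l, Rmult_0_r, exp_0.
    destruct (Req_EM_T 0 0); [reflexivity | contradiction].
  - unfold Rpower. f_equal. ring.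
Qed.

Lemma xlnx_scale s x : 0 < s -> 0 <= x -> xlnx (s * x) = s * xlnx x + s * x * ln s.
Proof.
  intros Hs Hx. unfold xlnx. destruct (Req_dec x 0) as [->|Hx0]; [ring|].
  rewrite ln_mult by lra. ring.
Qed.

(* Vanishes at [mu = 1 - 1/k], where [Gamma_r k r mu = gamma_r k r ^ 2]. *)
Definition mu_dev (k : nat) (mu : R) : R := 1 - INR k * mu / (INR k - 1).

Definition log_tfun (k : nat) (mu : R) : R :=
  xlnx ((1 - mu) / INR k) + 2 * xlnx (mu / INR k) + xlnx (1 - 1 / INR k - mu / INR k).

Section Gamma_bound.

Variable k : nat.
Hypothesis k_ge3 : (3 <= k)%nat.

Let K_ge3 : 3 <= INR k.
Proof. replace 3 with (INR 3) by (simpl; ring). apply le_INR, k_ge3. Qed.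

Lemma tfun_exp mu : 0 <= mu <= 1 -> tfun k mu = exp (log_tfun k mu).
Proof.
  intros Hmu. unfold tfun, log_tfun.
  assert (Hc : 0 <= 1 - 1 / INR k - mu / INR k).
  { replace (1 - 1 / INR k - mu / INR k) with ((INR k - 1 - mu) / INR k) by (field; lra).
    apply Rdiv_le_0_compat; lra. }
  rewrite (rpow_scaled_self _ 1 _), (rpow_scaled_self (mu / INR k) 2 _),
    (rpow_scaled_self (1 - 1 / INR k - mu / INR k) 1 _)
    by (try apply Rdiv_le_0_compat; (lra || field; lra)).
  rewrite <- !exp_plus. f_equal. ring.
Qed.

Lemma Gfun_pos mu : 0 <= mu <= 1 -> 0 < Gfun k mu.
Proof.
  intros Hmu. unfold Gfun. apply Rmult_lt_0_compat; [apply Rmult_lt_0_compat|].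
  - apply exp_pos.
  - apply pow_lt. lra.
  - nra.
Qed.

Lemma ln_Gfun mu : 0 <= mu <= 1 ->
  ln (Gfun k mu) = (1 - INR k) * ln (INR k) + (INR k - 2) * ln (INR k - 1 - mu)
                   + ln (INR k * (1 - mu + mu ^ 2) - 1).
Proof.
  intros Hmu. unfold Gfun.
  rewrite !ln_mult, ln_Rpower, ln_pow, minus_INR by
    (try apply Rmult_lt_0_compat; try apply exp_pos; try apply pow_lt; nra || lia).
  reflexivity.
Qed.

Lemma ln_gfun_inv :
  ln (gfun k (1 / INR k)) = (INR k - 1) * (ln (INR k - 1) - ln (INR k)).
Proof.
  unfold gfun. replace (INR k * (1 / INR k)) with 1 by (field; lra).
  replace (1 - 1 / INR k) with ((INR k - 1) / INR k) by (field; lra).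
  rewrite Rmult_1_l, ln_pow, ln_div, minus_INR by (try apply Rdiv_lt_0_compat; lra || lia).
  reflexivity.
Qed.

Lemma ln_Gfun_sub_ln_gfun_le mu : 0 <= mu <= 1 ->
  ln (Gfun k mu) - 2 * ln (gfun k (1 / INR k)) <= mu_dev k mu ^ 2.
Proof.
  intros Hmu. rewrite ln_Gfun, ln_gfun_inv by exact Hmu. unfold mu_dev.
  set (K := INR k) in *. set (V := K - 1 - mu). set (Q := K * (1 - mu + mu ^ 2) - 1).
  assert (HV : 0 < V) by (unfold V; lra).
  assert (HQ : 0 < Q) by (unfold Q; nra).
  assert (Hln : forall X, 0 < X ->
    ln (K * X / (K - 1)^2) = ln K + ln X - 2 * ln (K - 1)).
  { intros X HX. rewrite ln_div, ln_mult, ln_pow by (try apply pow_lt; nra).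
    simpl INR. ring. }
  pose proof (ln_le_sub1 (K * V / (K - 1)^2) ltac:(apply Rdiv_lt_0_compat; nra)) as HU.
  pose proof (ln_le_sub1 (K * Q / (K - 1)^2) ltac:(apply Rdiv_lt_0_compat; nra)) as HW.
  rewrite Hln in HU, HW by assumption.
  assert (Hid : (K - 2) * (K * V / (K - 1)^2 - 1) + (K * Q / (K - 1)^2 - 1)
                = (1 - K * mu / (K - 1)) ^ 2) by (unfold V, Q; field; lra).
  apply (Rmult_le_compat_l (K - 2)) in HU; [|lra].
  lra.
Qed.

Lemma log_tfun_gap_eq mu : 0 <= mu <= 1 ->
  log_tfun k mu - 2 * (xlnx (1 / INR k) + xlnx (1 - 1 / INR k))
  = entropy_gap (INR k - 1) (mu_dev k mu) / INR k ^ 2.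
Proof.
  intros Hmu. unfold log_tfun, entropy_gap, mu_dev.
  set (K := INR k) in *. set (m := K - 1). set (y := 1 - K * mu / m).
  assert (Hm : 0 < m) by (unfold m; lra).
  assert (Ha : (1 - mu) / K = / K^2 * (1 + m * y)) by (unfold y, m; field; lra).
  assert (Hb : mu / K = m / K^2 * (1 - y)) by (unfold y, m; field; lra).
  assert (Hc : 1 - 1 / K - mu / K = m^2 / K^2 * (1 + y / m))
    by (unfold y, m; field; lra).
  assert (H1K : 1 / K = / K^2 * K) by (field; lra).
  assert (H1K' : 1 - 1 / K = m / K^2 * K) by (unfold m; field; lra).
  rewrite Hc, Ha, Hb, H1K', H1K, !xlnx_scale;
    try (apply Rdiv_lt_0_compat || apply Rinv_0_lt_compat; nra); try lra.
  - unfold xlnx, Rdiv. rewrite !ln_mult, ln_Rinv, !ln_pow by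
      (try apply Rinv_0_lt_compat; try apply pow_lt; lra).
    simpl INR. unfold m. field. lra.
  - unfold y, m. replace (1 + (1 - K * mu / (K - 1)) / (K - 1))
      with (K * (K - 1 - mu) / (K - 1)^2) by (field; lra).
    apply Rdiv_le_0_compat; nra.
  - unfold y. replace (1 - (1 - K * mu / m)) with (K * mu / m) by ring.
    apply Rdiv_le_0_compat; nra.
  - unfold y, m. replace (1 + (K - 1) * (1 - K * mu / (K - 1))) with (K * (1 - mu))
      by (field; lra). nra.
Qed.

Lemma mu_dev_range mu : 0 <= mu <= 1 -> -1 / (INR k - 1) <= mu_dev k mu <= 1.
Proof.
  intros Hmu. unfold mu_dev.
  assert (Hfrac : 0 <= INR k * mu / (INR k - 1) <= INR k / (INR k - 1)).
  { split; [apply Rdiv_le_0_compat; nra|].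
    apply Rmult_le_compat_r; [apply Rlt_le, Rinv_0_lt_compat; lra | nra]. }
  replace (-1 / (INR k - 1)) with (1 - INR k / (INR k - 1)) by (field; lra).
  lra.
Qed.

Lemma log_tfun_gap_ge mu : 0 <= mu <= 1 ->
  ln (INR k) / INR k * mu_dev k mu ^ 2
  <= log_tfun k mu - 2 * (xlnx (1 / INR k) + xlnx (1 - 1 / INR k)).
Proof.
  intros Hmu. rewrite log_tfun_gap_eq by exact Hmu.
  pose proof (entropy_gap_ge_sqr (INR k - 1) (mu_dev k mu) ltac:(lra)
                (mu_dev_range mu Hmu)) as Hgap.
  replace (INR k - 1 + 1) with (INR k) in Hgap by ring.
  apply Rmult_le_reg_r with (INR k ^ 2); [nra|].
  replace (entropy_gap (INR k - 1) (mu_dev k mu) / INR k ^ 2 * INR k ^ 2)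
    with (entropy_gap (INR k - 1) (mu_dev k mu)) by (field; lra).
  replace (ln (INR k) / INR k * mu_dev k mu ^ 2 * INR k ^ 2)
    with (INR k * ln (INR k) * mu_dev k mu ^ 2) by (field; lra).
  exact Hgap.
Qed.

Lemma Gamma_r_exp r mu : 0 <= mu <= 1 ->
  Gamma_r k r mu = exp (r * ln (Gfun k mu) - log_tfun k mu).
Proof.
  intros Hmu. unfold Gamma_r.
  rewrite tfun_exp, rpow_pos_exp by (try apply Gfun_pos; exact Hmu).
  unfold Rminus. rewrite exp_plus, exp_Ropp. reflexivity.
Qed.

Lemma gamma_r_sqr_exp r :
  gamma_r k r ^ 2
  = exp (2 * (r * ln (gfun k (1 / INR k)) - (xlnx (1 / INR k) + xlnx (1 - 1 / INR k)))).
Proof.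
  unfold gamma_r. cbv zeta.
  assert (Hinv : 0 < 1 / INR k < 1).
  { split; [apply Rdiv_lt_0_compat; lra|].
    apply Rmult_lt_reg_r with (INR k); [lra|]. field_simplify; lra. }
  assert (Hg : 0 < gfun k (1 / INR k)).
  { unfold gfun. apply Rmult_lt_0_compat; [nra | apply pow_lt; lra]. }
  rewrite rpow_pos_exp, (rpow_scaled_self _ 1 _), (rpow_scaled_self (1 - 1 / INR k) 1 _)
    by (ring || lra).
  rewrite <- exp_plus. unfold Rdiv. rewrite <- exp_Ropp, <- exp_plus.
  simpl. rewrite Rmult_1_r, <- exp_plus. f_equal. ring.
Qed.

End Gamma_bound.

Theorem mainTheorem4 (k : nat) (r mu : R) :
  (3 <= k)%nat -> 0 < r -> r <= ln (INR k) / INR k ->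
  0 <= mu <= 1 ->
  Gamma_r k r mu <= (gamma_r k r) ^ 2.
Proof.
  intros Hk Hr Hrk Hmu.
  rewrite Gamma_r_exp, gamma_r_sqr_exp by assumption.
  apply exp_le_exp_of_le.
  pose proof (ln_Gfun_sub_ln_gfun_le k Hk mu Hmu) as HG.
  pose proof (log_tfun_gap_ge k Hk mu Hmu) as Ht.
  assert (Hsq : 0 <= mu_dev k mu ^ 2) by apply pow2_ge_0.
  assert (r * (ln (Gfun k mu) - 2 * ln (gfun k (1 / INR k)))
          <= ln (INR k) / INR k * mu_dev k mu ^ 2) by nra.
  lra.
Qed.
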